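(* Let $A$ be a partially ordered set that has a top element $\top$ and a bottom element $\bot$. Then every passable game over $A$ is equivalent to a monotone game over $A$.
   Context: Games over a poset $A$ are defined inductively: for each $a\in A$ there is an atomic game $[a]$ (often written $a$), which has no options; and if $L$ and $R$ are non-empty sets of games, then $\{L\mid R\}$ is a composite game with set of left options $L$ and set of right options $R$. The relations $\le$ and $\lhd$ on games over $A$ are defined by simultaneous recursion: $G\le H$ iff (1) every left option $G^L$ of $G$ satisfies $G^L\lhd H$, (2) every right option $H^R$ of $H$ satisfies $G\lhd H^R$, and (3) if $G$ or $H$ is atomic then $G\lhd H$; and $G\lhd H$ iff (1) some right option $G^R$ of $G$ satisfies $G^R\le H$, or (2) some left option $H^L$ of $H$ satisfies $G\le H^L$, or (3) $G=[a]$ and $H=[b]$ are both atomic and $a\le b$ in $A$. Games $G,H$ are equivalent, $G\equiv H$, if $G\le H$ and $H\le G$. A game $G$ is passable if $G\lhd G$ and (recursively) all its left and right options are passable. A left option $G^L$ of $G$ is good if $G\le G^L$; a right option $G^R$ is good if $G^R\le G$. A game is monotone if all of its left and right options are good and (recursively) all its options are monotone; atomic games are monotone. *)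

Set Implicit Arguments.

(* Games over a type A (the poset carrier).  A composite game {L | R} is
   represented by two non-empty indexed families of options. *)
Inductive game (A : Type) : Type :=
| Atom : A -> game A
| Comp : forall (I J : Type), (I -> game A) -> (J -> game A) ->
         inhabited I -> inhabited J -> game A.

Arguments Atom {A} _.
Arguments Comp {A} I J _ _ _ _.

Definition is_atom {A : Type} (G : game A) : Prop :=
  match G with Atom _ => True | Comp _ _ _ _ _ _ => False end.

(* Simultaneous recursion: cmp leA G H = (G <= H, G <| H). *)
Fixpoint cmp {A : Type} (leA : A -> A -> Prop) (G : game A) {struct G}
  : game A -> Prop * Prop :=
  fix cmpH (H : game A) {struct H} : Prop * Prop :=
    let lhd : Prop :=
      (match G with
       | Atom _ => False
       | Comp _ _ _ r _ _ => exists j, fst (cmp leA (r j) H)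
       end)
      \/
      (match H with
       | Atom _ => False
       | Comp _ _ l _ _ _ => exists i, fst (cmpH (l i))
       end)
      \/
      (match G, H with
       | Atom a, Atom b => leA a b
       | _, _ => False
       end) in
    let le : Prop :=
      (match G with
       | Atom _ => True
       | Comp _ _ l _ _ _ => forall i, snd (cmp leA (l i) H)
       end)
      /\
      (match H with
       | Atom _ => True
       | Comp _ _ _ r _ _ => forall j, snd (cmpH (r j))
       end)
      /\
      ((is_atom G \/ is_atom H) -> lhd) in
    (le, lhd).

Definition game_le {A : Type} (leA : A -> A -> Prop) (G H : game A) : Prop :=
  fst (cmp leA G H).
Definition game_lhd {A : Type} (leA : A -> A -> Prop) (G H : game A) : Prop :=
  snd (cmp leA G H).
Definition game_equiv {A : Type} (leA : A -> A -> Prop) (G H : game A) : Prop :=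
  game_le leA G H /\ game_le leA H G.

Fixpoint passable {A : Type} (leA : A -> A -> Prop) (G : game A) : Prop :=
  game_lhd leA G G /\
  match G with
  | Atom _ => True
  | Comp _ _ l r _ _ => (forall i, passable leA (l i)) /\ (forall j, passable leA (r j))
  end.

Fixpoint monotone {A : Type} (leA : A -> A -> Prop) (G : game A) : Prop :=
  match G with
  | Atom _ => True
  | Comp _ _ l r _ _ =>
      (forall i, game_le leA G (l i)) /\ (forall j, game_le leA (r j) G) /\
      (forall i, monotone leA (l i)) /\ (forall j, monotone leA (r j))
  end.

(* By induction on G, replace the options of G = {G^L | G^R} by equivalent
   monotone games G^L', G^R'.  Write ↑Q = {⊤ | Q} and ↓P = {P | ⊥}: then
   K ≤ ↑Q as soon as K ◁ Q, ↓P ≤ K as soon as P ◁ K, and a game with left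
   option ⊤ (resp. right option ⊥) is ◁-above (resp. ◁-below) every game.
   Passability G ◁ G provides monotone games U, V with U ◁ G ≤ U and
   V ≤ G ◁ V: one of them is equivalent to a good option of G, the other is
   its image under ↑ or ↓.  The game
       {↑{↑↓G^L', ↑V | ⊥} | ↓{⊤ | ↓↑G^R', ↓U}}
   is then equivalent to G; the padding by ⊤ and ⊥ makes all its options good
   except the two outermost ones, which are good thanks to V and U. *)

From Stdlib Require Import IndefiniteDescription.

Section Games.

Variable A : Type.
Variable leA : A -> A -> Prop.

Local Infix "≤" := (game_le leA) (at level 70).
Local Infix "◁" := (game_lhd leA) (at level 70).
Local Infix "≡" := (game_equiv leA) (at level 70).

Definition left_option (X G : game A) : Prop :=
  match G with Atom _ => False | Comp _ _ l _ _ _ => exists i, X = l i end.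
Definition right_option (Y G : game A) : Prop :=
  match G with Atom _ => False | Comp _ _ _ r _ _ => exists j, Y = r j end.

Lemma game_le_iff G H :
  G ≤ H <->
  (forall X, left_option X G -> X ◁ H) /\
  (forall Y, right_option Y H -> G ◁ Y) /\
  (is_atom G \/ is_atom H -> G ◁ H).
Proof.
  unfold game_le, game_lhd.
  destruct G as [a|I J l r hI hJ], H as [b|I' J' l' r' hI' hJ']; simpl;
    (split; [intros (h1 & h2 & h3); repeat split;
             try (intros X [i ->]); try (intros X []); eauto
            |intros (h1 & h2 & h3); repeat split; intros;
             try apply h1; try apply h2; try apply h3; eauto]).
Qed.

Lemma game_lhd_iff G H :
  G ◁ H <->
  (exists Y, right_option Y G /\ Y ≤ H) \/
  (exists X, left_option X H /\ G ≤ X) \/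
  (exists a b, G = Atom a /\ H = Atom b /\ leA a b).
Proof.
  unfold game_le, game_lhd; split.
  - destruct G as [a|I J l r hI hJ], H as [b|I' J' l' r' hI' hJ']; simpl;
      intros [h|[h|h]]; try destruct h as [k hk]; try contradiction; eauto 10.
  - intros [(Y & hY & h)|[(X & hX & h)|(a & b & -> & -> & h)]].
    + destruct G as [|I J l r hI hJ]; [contradiction|]. destruct hY as [j ->].
      destruct H; simpl; left; exists j; exact h.
    + destruct H as [|I J l r hI hJ]; [contradiction|]. destruct hX as [i ->].
      destruct G; simpl; right; left; exists i; exact h.
    + simpl; right; right; exact h.
Qed.

Lemma lhd_of_right_le G H Y : right_option Y G -> Y ≤ H -> G ◁ H.
Proof. intros hY h. apply game_lhd_iff. eauto. Qed.

Lemma lhd_of_le_left G H X : left_option X H -> G ≤ X -> G ◁ H.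
Proof. intros hX h. apply game_lhd_iff. eauto. Qed.

Lemma game_lhd_atoms {a b : A} : leA a b -> Atom a ◁ Atom b.
Proof. intro h. apply game_lhd_iff. eauto 7. Qed.

Lemma game_le_atoms {a b : A} : leA a b -> Atom a ≤ Atom b.
Proof.
  intro h. apply game_le_iff; repeat split; try (intros ? []).
  intros _. apply game_lhd_atoms, h.
Qed.

Hypothesis leA_refl : forall a, leA a a.

Lemma game_le_refl G : G ≤ G.
Proof.
  induction G as [a|I J l IHl r IHr hI hJ].
  - apply game_le_atoms, leA_refl.
  - apply game_le_iff; repeat split.
    + intros X [i ->]. eapply lhd_of_le_left; [exists i; reflexivity | apply IHl].
    + intros Y [j ->]. eapply lhd_of_right_le; [exists j; reflexivity | apply IHr].
    + intros [[]|[]].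
Qed.

Definition option_of (X G : game A) : Prop := left_option X G \/ right_option X G.

Lemma option_of_wf : well_founded option_of.
Proof.
  intro G; induction G as [a|I J l IHl r IHr hI hJ]; constructor.
  - intros X [[]|[]].
  - intros X [[i ->]|[j ->]]; auto.
Qed.

Hypothesis leA_trans : forall a b c, leA a b -> leA b c -> leA a c.

Lemma game_trans G H K :
  (G ≤ H -> H ≤ K -> G ≤ K) /\ (G ≤ H -> H ◁ K -> G ◁ K) /\ (G ◁ H -> H ≤ K -> G ◁ K).
Proof.
  revert H K; induction (option_of_wf G) as [G _ IHG]; intro H.
  induction (option_of_wf H) as [H _ IHH]; intro K.
  induction (option_of_wf K) as [K _ IHK].
  assert (lhd_le : G ◁ H -> H ≤ K -> G ◁ K).
  { intros hGH hHK; pose proof hHK as (hl & _ & ha)%game_le_iff.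
    apply game_lhd_iff in hGH as [(Y & hY & hYH)|[(X & hX & hGX)|(a & b & -> & -> & hab)]].
    - eapply lhd_of_right_le; [exact hY|].
      destruct (IHG Y (or_intror hY) H K) as (le_le & _ & _); auto.
    - destruct (IHH X (or_introl hX) K) as (_ & le_lhd & _); auto.
    - specialize (ha (or_introl I)).
      apply game_lhd_iff in ha as [([] & [] & _)|[(X & hX & hbX)|(b' & c & [= <-] & -> & hbc)]].
      + eapply lhd_of_le_left; [exact hX|].
        destruct (IHK X (or_introl hX)) as (le_le & _ & _); auto using game_le_atoms.
      + apply game_lhd_atoms; eauto. }
  assert (le_lhd : G ≤ H -> H ◁ K -> G ◁ K).
  { intros hGH hHK; pose proof hGH as (_ & hr & ha)%game_le_iff.
    apply game_lhd_iff in hHK as [(Y & hY & hYK)|[(X & hX & hHX)|(b & c & -> & -> & hbc)]].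
    - destruct (IHH Y (or_intror hY) K) as (_ & _ & lhd_le'); auto.
    - eapply lhd_of_le_left; [exact hX|].
      destruct (IHK X (or_introl hX)) as (le_le & _ & _); auto.
    - specialize (ha (or_intror I)).
      apply game_lhd_iff in ha as [(Y & hY & hYb)|[([] & [] & _)|(a & b' & -> & [= <-] & hab)]].
      + eapply lhd_of_right_le; [exact hY|].
        destruct (IHG Y (or_intror hY) (Atom b) (Atom c)) as (le_le & _ & _);
          auto using game_le_atoms.
      + apply game_lhd_atoms; eauto. }
  split; [|split; assumption].
  intros hGH hHK.
  pose proof hGH as (hGl & _ & hGHa)%game_le_iff.
  pose proof hHK as (_ & hKr & hHKa)%game_le_iff.
  apply game_le_iff; repeat split.
  - intros X hX. destruct (IHG X (or_introl hX) H K) as (_ & _ & lhd_le'); auto.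
  - intros Y hY. destruct (IHK Y (or_intror hY)) as (_ & le_lhd' & _); auto.
  - intros [hG|hK]; auto.
Qed.

Lemma game_le_trans {G H K : game A} : G ≤ H -> H ≤ K -> G ≤ K.
Proof. apply game_trans. Qed.

Lemma game_le_lhd_trans {G H K : game A} : G ≤ H -> H ◁ K -> G ◁ K.
Proof. apply game_trans. Qed.

Lemma game_lhd_le_trans {G H K : game A} : G ◁ H -> H ≤ K -> G ◁ K.
Proof. apply game_trans. Qed.

Lemma game_lhd_self_equiv {G H : game A} : G ◁ G -> G ≡ H -> H ◁ H.
Proof.
  intros hG [hGH hHG].
  exact (game_lhd_le_trans (game_le_lhd_trans hHG hG) hGH).
Qed.

Variables top bot : A.
Hypothesis top_max : forall a, leA a top.
Hypothesis bot_min : forall a, leA bot a.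

Lemma game_le_lhd_top K : K ≤ Atom top /\ K ◁ Atom top.
Proof.
  induction K as [a|I J l IHl r IHr hI hJ].
  - split; [apply game_le_atoms | apply game_lhd_atoms]; apply top_max.
  - assert (lhd_top : Comp I J l r hI hJ ◁ Atom top).
    { destruct hJ as [j]. eapply lhd_of_right_le; [exists j; reflexivity | apply IHr]. }
    split; [|exact lhd_top].
    apply game_le_iff; repeat split; [intros X [i ->]; apply IHl | intros Y [] | auto].
Qed.

Lemma game_bot_le_lhd K : Atom bot ≤ K /\ Atom bot ◁ K.
Proof.
  induction K as [a|I J l IHl r IHr hI hJ].
  - split; [apply game_le_atoms | apply game_lhd_atoms]; apply bot_min.
  - assert (bot_lhd : Atom bot ◁ Comp I J l r hI hJ).
    { destruct hI as [i]. eapply lhd_of_le_left; [exists i; reflexivity | apply IHl]. }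
    split; [|exact bot_lhd].
    apply game_le_iff; repeat split; [intros X [] | intros Y [j ->]; apply IHr | auto].
Qed.

Lemma game_le_top K : K ≤ Atom top.
Proof. apply game_le_lhd_top. Qed.

Lemma game_bot_le K : Atom bot ≤ K.
Proof. apply game_bot_le_lhd. Qed.

Lemma lhd_of_top_left G H : left_option (Atom top) H -> G ◁ H.
Proof. intro hT. eapply lhd_of_le_left; [exact hT | apply game_le_top]. Qed.

Lemma lhd_of_bot_right G H : right_option (Atom bot) G -> G ◁ H.
Proof. intro hB. eapply lhd_of_right_le; [exact hB | apply game_bot_le]. Qed.

Definition pair (P Q : game A) : game A :=
  Comp unit unit (fun _ => P) (fun _ => Q) (inhabits tt) (inhabits tt).

Definition up (Q : game A) : game A := pair (Atom top) Q.
Definition down (P : game A) : game A := pair P (Atom bot).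

Lemma left_option_pair P Q : left_option P (pair P Q).
Proof. exists tt; reflexivity. Qed.

Lemma right_option_pair P Q : right_option Q (pair P Q).
Proof. exists tt; reflexivity. Qed.

Lemma monotone_pair P Q :
  pair P Q ≤ P -> Q ≤ pair P Q -> monotone leA P -> monotone leA Q ->
  monotone leA (pair P Q).
Proof. intros; simpl; auto. Qed.

Lemma le_up K Q : K ◁ Q -> K ≤ up Q.
Proof.
  intro h. apply game_le_iff; repeat split.
  - intros X _. apply lhd_of_top_left, left_option_pair.
  - intros Y [[] ->]. exact h.
  - intros _. apply lhd_of_top_left, left_option_pair.
Qed.

Lemma down_le K P : P ◁ K -> down P ≤ K.
Proof.
  intro h. apply game_le_iff; repeat split.
  - intros X [[] ->]. exact h.
  - intros Y _. apply lhd_of_bot_right, right_option_pair.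
  - intros _. apply lhd_of_bot_right, right_option_pair.
Qed.

Lemma monotone_up Q : Q ◁ Q -> monotone leA Q -> monotone leA (up Q).
Proof.
  intros hQ mQ. apply monotone_pair; [apply game_le_top | apply le_up, hQ | exact I | exact mQ].
Qed.

Lemma monotone_down P : P ◁ P -> monotone leA P -> monotone leA (down P).
Proof.
  intros hP mP. apply monotone_pair; [apply down_le, hP | apply game_bot_le | exact mP | exact I].
Qed.

Definition rebuild_left (V : game A) {I : Type} (Mx : I -> game A) : game A :=
  Comp (option I) unit
    (fun o => match o with Some i => up (down (Mx i)) | None => up V end)
    (fun _ => Atom bot) (inhabits None) (inhabits tt).

Definition rebuild_right (U : game A) {J : Type} (My : J -> game A) : game A :=
  Comp unit (option J) (fun _ => Atom top)
    (fun o => match o with Some j => down (up (My j)) | None => down U end)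
    (inhabits tt) (inhabits None).

Definition rebuild (U V : game A) {I J : Type} (Mx : I -> game A) (My : J -> game A)
  : game A :=
  pair (up (rebuild_left V Mx)) (down (rebuild_right U My)).

Lemma monotone_rebuild_left V {I : Type} (Mx : I -> game A) :
  V ◁ V -> monotone leA V ->
  (forall i, Mx i ◁ Mx i) -> (forall i, monotone leA (Mx i)) ->
  monotone leA (rebuild_left V Mx).
Proof.
  intros hV mV hMx mMx. split; [|split; [|split]].
  - intros [i|]; apply le_up, lhd_of_bot_right; exists tt; reflexivity.
  - intros _. apply game_bot_le.
  - intros [i|]; apply monotone_up; auto.
    + apply lhd_of_bot_right, right_option_pair.
    + apply monotone_down; auto.
  - intros _; constructor.
Qed.

Lemma monotone_rebuild_right U {J : Type} (My : J -> game A) :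
  U ◁ U -> monotone leA U ->
  (forall j, My j ◁ My j) -> (forall j, monotone leA (My j)) ->
  monotone leA (rebuild_right U My).
Proof.
  intros hU mU hMy mMy. split; [|split; [|split]].
  - intros _. apply game_le_top.
  - intros [j|]; apply down_le, lhd_of_top_left; exists tt; reflexivity.
  - intros _; constructor.
  - intros [j|]; apply monotone_down; auto.
    + apply lhd_of_top_left, left_option_pair.
    + apply monotone_up; auto.
Qed.

Lemma monotone_rebuild U V {I J : Type} (Mx : I -> game A) (My : J -> game A) :
  monotone leA (rebuild_left V Mx) -> monotone leA (rebuild_right U My) ->
  rebuild U V Mx My ◁ V -> U ◁ rebuild U V Mx My ->
  monotone leA (rebuild U V Mx My).
Proof.
  intros mL mR hV hU. apply monotone_pair.
  - apply le_up. eapply lhd_of_le_left; [exists None; reflexivity|]. apply le_up, hV.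
  - apply down_le. eapply lhd_of_right_le; [exists None; reflexivity|]. apply down_le, hU.
  - apply monotone_up; [apply lhd_of_bot_right; exists tt; reflexivity | exact mL].
  - apply monotone_down; [apply lhd_of_top_left; exists tt; reflexivity | exact mR].
Qed.

Lemma le_rebuild U V I J l r hI hJ (Mx : I -> game A) (My : J -> game A) :
  (forall i, l i ≤ Mx i) -> (forall j, r j ≤ My j) -> Comp I J l r hI hJ ≤ U ->
  Comp I J l r hI hJ ≤ rebuild U V Mx My.
Proof.
  intros hl hr hU. apply game_le_iff; repeat split.
  - intros X [i ->]. eapply lhd_of_le_left; [apply left_option_pair|]. apply le_up.
    eapply lhd_of_le_left; [exists (Some i); reflexivity|]. apply le_up.
    eapply lhd_of_le_left; [apply left_option_pair | apply hl].
  - intros Y [[] ->]. eapply lhd_of_le_left; [apply left_option_pair|].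
    apply game_le_iff; repeat split.
    + intros X _. apply lhd_of_top_left. exists tt; reflexivity.
    + intros Y [[j|] ->]; eapply lhd_of_le_left; try apply left_option_pair.
      * apply le_up. eapply lhd_of_right_le; [exists j; reflexivity | apply hr].
      * exact hU.
    + intros [[]|[]].
  - intros [[]|[]].
Qed.

Lemma rebuild_le U V I J l r hI hJ (Mx : I -> game A) (My : J -> game A) :
  (forall i, Mx i ≤ l i) -> (forall j, My j ≤ r j) -> V ≤ Comp I J l r hI hJ ->
  rebuild U V Mx My ≤ Comp I J l r hI hJ.
Proof.
  intros hl hr hV. apply game_le_iff; repeat split.
  - intros X [[] ->]. eapply lhd_of_right_le; [apply right_option_pair|].
    apply game_le_iff; repeat split.
    + intros X [[i|] ->]; eapply lhd_of_right_le; try apply right_option_pair.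
      * apply down_le. eapply lhd_of_le_left; [exists i; reflexivity | apply hl].
      * exact hV.
    + intros Y _. apply lhd_of_bot_right. exists tt; reflexivity.
    + intros [[]|[]].
  - intros Y [j ->]. eapply lhd_of_right_le; [apply right_option_pair|]. apply down_le.
    eapply lhd_of_right_le; [exists (Some j); reflexivity|]. apply down_le.
    eapply lhd_of_right_le; [apply right_option_pair | apply hr].
  - intros [[]|[]].
Qed.

Definition upper_bracket (G U : game A) : Prop := monotone leA U /\ G ≤ U /\ U ◁ G.
Definition lower_bracket (G V : game A) : Prop := monotone leA V /\ V ≤ G /\ G ◁ V.

Lemma upper_bracket_up G V : lower_bracket G V -> upper_bracket G (up V).
Proof.
  intros (mV & hVG & hGV). split; [|split].
  - apply monotone_up; [exact (game_le_lhd_trans hVG hGV) | exact mV].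
  - apply le_up, hGV.
  - eapply lhd_of_right_le; [apply right_option_pair | exact hVG].
Qed.

Lemma lower_bracket_down G U : upper_bracket G U -> lower_bracket G (down U).
Proof.
  intros (mU & hGU & hUG). split; [|split].
  - apply monotone_down; [exact (game_lhd_le_trans hUG hGU) | exact mU].
  - apply down_le, hUG.
  - eapply lhd_of_le_left; [apply left_option_pair | exact hGU].
Qed.

Lemma lower_bracket_of_right_le {G Y M : game A} :
  right_option Y G -> Y ≤ G -> monotone leA M -> Y ≡ M -> lower_bracket G M.
Proof.
  intros hY hYG mM [hYM hMY]. split; [|split].
  - exact mM.
  - exact (game_le_trans hMY hYG).
  - eapply lhd_of_right_le; [exact hY | exact hYM].
Qed.

Lemma upper_bracket_of_le_left {G X M : game A} :
  left_option X G -> G ≤ X -> monotone leA M -> X ≡ M -> upper_bracket G M.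
Proof.
  intros hX hGX mM [hXM hMX]. split; [|split].
  - exact mM.
  - exact (game_le_trans hGX hXM).
  - eapply lhd_of_le_left; [exact hX | exact hMX].
Qed.

Lemma brackets_of_lhd_self {G : game A} :
  G ◁ G -> (forall X, option_of X G -> exists M, monotone leA M /\ X ≡ M) ->
  exists U V, upper_bracket G U /\ lower_bracket G V.
Proof.
  intros hG hopt.
  apply game_lhd_iff in hG as [(Y & hY & hYG)|[(X & hX & hGX)|(a & b & -> & [= <-] & haa)]].
  - destruct (hopt Y (or_intror hY)) as (M & mM & hYM).
    pose proof (lower_bracket_of_right_le hY hYG mM hYM) as hM.
    exists (up M), M; split; [apply upper_bracket_up|]; exact hM.
  - destruct (hopt X (or_introl hX)) as (M & mM & hXM).
    pose proof (upper_bracket_of_le_left hX hGX mM hXM) as hM.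
    exists M, (down M); split; [|apply lower_bracket_down]; exact hM.
  - pose proof (game_le_atoms haa) as hle; pose proof (game_lhd_atoms haa) as hlhd.
    exists (Atom a), (Atom a); split; (split; [constructor | split; assumption]).
Qed.

Lemma monotone_equiv_of_options I J l r hI hJ (Mx : I -> game A) (My : J -> game A) :
  Comp I J l r hI hJ ◁ Comp I J l r hI hJ ->
  (forall i, l i ◁ l i) -> (forall j, r j ◁ r j) ->
  (forall i, monotone leA (Mx i) /\ l i ≡ Mx i) ->
  (forall j, monotone leA (My j) /\ r j ≡ My j) ->
  exists H, monotone leA H /\ Comp I J l r hI hJ ≡ H.
Proof.
  intros hG hl hr hMx hMy.
  destruct (brackets_of_lhd_self hG) as (U & V & (mU & hGU & hUG) & (mV & hVG & hGV)).
  { intros X [[i ->]|[j ->]]; eauto. }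
  assert (le_G : Comp I J l r hI hJ ≤ rebuild U V Mx My).
  { apply le_rebuild; [intro i; apply hMx | intro j; apply hMy | exact hGU]. }
  assert (G_le : rebuild U V Mx My ≤ Comp I J l r hI hJ).
  { apply rebuild_le; [intro i; apply hMx | intro j; apply hMy | exact hVG]. }
  exists (rebuild U V Mx My); split; [|split; assumption].
  apply monotone_rebuild.
  - apply monotone_rebuild_left; [exact (game_le_lhd_trans hVG hGV) | exact mV | | apply hMx].
    intro i; apply (game_lhd_self_equiv (hl i)), hMx.
  - apply monotone_rebuild_right; [exact (game_lhd_le_trans hUG hGU) | exact mU | | apply hMy].
    intro j; apply (game_lhd_self_equiv (hr j)), hMy.
  - exact (game_le_lhd_trans G_le hGV).
  - exact (game_lhd_le_trans hUG le_G).
Qed.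

End Games.

Lemma passable_lhd_self {A : Type} (leA : A -> A -> Prop) (G : game A) :
  passable leA G -> game_lhd leA G G.
Proof. destruct G; intros [h _]; exact h. Qed.

Theorem theorem6p5 (A : Type) (leA : A -> A -> Prop)
  (le_refl : forall a, leA a a)
  (le_antisym : forall a b, leA a b -> leA b a -> a = b)
  (le_trans : forall a b c, leA a b -> leA b c -> leA a c)
  (top bot : A) (top_max : forall a, leA a top) (bot_min : forall a, leA bot a)
  (G : game A) :
  passable leA G -> exists H : game A, monotone leA H /\ game_equiv leA G H.
Proof.
  induction G as [a|I J l IHl r IHr hI hJ]; intro hG.
  - exists (Atom a); split; [constructor | split; apply game_le_refl, le_refl].
  - destruct hG as [hGG [hl hr]].
    destruct (functional_choice _ (fun i => IHl i (hl i))) as [Mx hMx].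
    destruct (functional_choice _ (fun j => IHr j (hr j))) as [My hMy].
    eapply monotone_equiv_of_options; eauto using passable_lhd_self.
Qed.
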